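(* Let $a>b\ge 1$ be integers, $n=a+b$, and let $\breve{K}_{a,b}$ be the Mycielskian of the complete bipartite graph $K_{a,b}$. Then $$E_{\chi}(\breve{K}_{a,b})=1+\frac{2(b+1)}{2n+1},\qquad V_{\chi}(\breve{K}_{a,b})=\frac{16a^2+4b^2+8a^2b+8b^2a+24ab+8a+2b}{(2n+1)^3}.$$
   Context: Mycielskian: for a graph $G$ with vertex set $\{v_1,\dots,v_m\}$, its Mycielskian $\breve{G}$ is the graph with vertex set $\{v_1,\dots,v_m\}\cup\{u_1,\dots,u_m\}\cup\{u\}$ (all new, distinct vertices) whose edges are: all edges of $G$; the edge $u_iv_j$ whenever $v_iv_j$ is an edge of $G$; and the edges $uu_i$ for all $i$. Colouring parameters: for a proper colouring $\mathcal{C}=\{c_1,\dots,c_k\}$ of $G$ with colours indexed $1,\dots,k$, let $\theta(c_i)$ be the number of vertices of colour $c_i$ and $f(i)=\theta(c_i)/|V(G)|$. The colouring mean is $\mu_{\mathcal{C}}=\sum_i i\,f(i)$, the colouring variance is $\sum_i (i-\mu_{\mathcal{C}})^2 f(i)$, and the colouring sum is $\sum_i i\,\theta(c_i)$. The $\chi$-chromatic mean $E_\chi(G)$ (resp. $\chi$-chromatic variance $V_\chi(G)$) is the colouring mean (resp. variance) of a proper colouring of $G$ with exactly $\chi(G)$ colours $c_1,\dots,c_{\chi(G)}$ whose colouring sum is minimum among all such colourings. *)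

From HB Require Import structures.
From mathcomp Require Import all_boot all_order all_algebra.
Set Implicit Arguments. Unset Strict Implicit. Unset Printing Implicit Defensive.
Import Order.TTheory GRing.Theory Num.Theory.

Definition Kab (a b : nat) : rel ('I_a + 'I_b)%type :=
  fun x y => match x, y with
             | inl _, inr _ | inr _, inl _ => true
             | _, _ => false end.

Arguments Kab : clear implicits.

(* Mycielskian: vertices Some (inl v) = v_i (original), Some (inr v) = u_i
   (copy), None = u. *)
Notation myc_vertex T := (option (T + T)%type).

Definition myc (T : finType) (e : rel T) : rel (myc_vertex T) :=
  fun x y => match x, y with
             | Some (inl x), Some (inl y) => e x y
             | Some (inl x), Some (inr y) => e y x
             | Some (inr x), Some (inl y) => e x y
             | Some (inr _), Some (inr _) => false
             | None, Some (inr _) | Some (inr _), None => true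
             | _, _ => false end.

(* Proper colouring with k colours; colour index i : 'I_k stands for c_{i+1}. *)
Definition proper_colouring (T : finType) (e : rel T) (k : nat) (c : T -> 'I_k) : Prop :=
  forall x y, e x y -> c x != c y.

Definition colourable (T : finType) (e : rel T) (k : nat) : Prop :=
  exists c : T -> 'I_k, proper_colouring e c.

Definition is_chromatic_number (T : finType) (e : rel T) (k : nat) : Prop :=
  colourable e k /\ forall k', k' < k -> ~ colourable e k'.

Definition theta (T : finType) (k : nat) (c : T -> 'I_k) (i : 'I_k) : nat :=
  #|[set x | c x == i]|.

Definition colouring_sum (T : finType) (k : nat) (c : T -> 'I_k) : nat :=
  \sum_(i < k) i.+1 * theta c i.

Local Open Scope ring_scope.

Definition freq (T : finType) (k : nat) (c : T -> 'I_k) (i : 'I_k) : rat :=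
  (theta c i)%:R / (#|T|)%:R.

Definition colouring_mean (T : finType) (k : nat) (c : T -> 'I_k) : rat :=
  \sum_(i < k) (i.+1)%:R * freq c i.

Definition colouring_variance (T : finType) (k : nat) (c : T -> 'I_k) : rat :=
  \sum_(i < k) ((i.+1)%:R - colouring_mean c) ^+ 2 * freq c i.

(* The apex u, an original vertex of each side and their two copies form the
   5-cycle v_i v_j u_i u u_j, so chi = 3, realised by colouring the a-side
   (originals and copies) 1, the b-side 2 and u 3, with colouring sum
   2a + 4b + 3.  In any proper colouring a colour class is independent, hence
   has at most 2a vertices, and colour 3 is used on the odd cycle; writing
   the colouring sum as |V| + (theta_2 + theta_3) + theta_3 shows that the
   minimum is attained exactly by the class sizes (2a, 2b, 1), from which the
   mean and variance are computed. *)

From HB Require Import structures.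
From mathcomp Require Import all_boot all_order all_algebra.
From mathcomp Require Import zify ring lra.
Import Order.TTheory GRing.Theory Num.Theory.

Set Implicit Arguments.
Unset Strict Implicit.
Unset Printing Implicit Defensive.

Lemma big_optionT (T : finType) (f : option T -> nat) :
  \sum_(x : option T) f x = f None + \sum_(x : T) f (Some x).
Proof.
by rewrite ![index_enum _]unlock [@Finite.enum in LHS]unlock /= big_cons big_map.
Qed.

Lemma sum_nat_bool_le (T : finType) (P : T -> bool) : \sum_x (P x : nat) <= #|T|.
Proof.
by rewrite -sum1_card; apply: leq_sum => x _; case: (P x).
Qed.

Lemma theta_sumE (T : finType) k (c : T -> 'I_k) i :
  theta c i = \sum_x (c x == i : nat).
Proof. by rewrite /theta -sum1dep_card big_mkcond; apply: eq_bigr => x _; case: eqP. Qed.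

Lemma sum_theta (T : finType) k (c : T -> 'I_k) : \sum_i theta c i = #|T|.
Proof.
under eq_bigr do rewrite theta_sumE.
rewrite exchange_big -sum1_card; apply: eq_bigr => x _.
by rewrite (bigD1 (c x)) //= eqxx big1 // => i /negbTE; rewrite eq_sym => ->.
Qed.

Lemma proper_colouring_cycle5 (T : finType) (e : rel T) k (c : T -> 'I_k)
    (x1 x2 x3 x4 x5 : T) :
  proper_colouring e c ->
  e x1 x2 -> e x2 x3 -> e x3 x4 -> e x4 x5 -> e x5 x1 ->
  exists x, (2 <= c x)%N.
Proof.
move=> hc e12 e23 e34 e45 e51.
have neq x y : e x y -> (c x : nat) <> c y by move=> /hc /eqP hxy /val_inj.
apply/existsP; apply: contraT; rewrite negb_exists => /forallP small.
have lt2 x : (c x < 2)%N by rewrite ltnNge small.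
move: (neq _ _ e12) (neq _ _ e23) (neq _ _ e34) (neq _ _ e45) (neq _ _ e51).
move: (lt2 x1) (lt2 x2) (lt2 x3) (lt2 x4) (lt2 x5); lia.
Qed.

Lemma chromatic_number_unique (T : finType) (e : rel T) k1 k2 :
  is_chromatic_number e k1 -> is_chromatic_number e k2 -> k1 = k2.
Proof.
move=> [col1 min1] [col2 min2].
by case: (ltngtP k1 k2) => // [/min2 | /min1].
Qed.

Section MycielskianKab.

Variables a b : nat.

Local Notation V := (myc_vertex ('I_a + 'I_b)%type).
Local Notation G := (myc (Kab a b)).
Local Notation vA i := (Some (inl (inl i))).
Local Notation vB j := (Some (inl (inr j))).
Local Notation uA i := (Some (inr (inl i))).
Local Notation uB j := (Some (inr (inr j))).
Local Notation apex := (None).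

Lemma sum_mycKab (f : V -> nat) :
  \sum_x f x = f apex + ((\sum_i f (vA i) + \sum_j f (vB j))
                       + (\sum_i f (uA i) + \sum_j f (uB j))).
Proof. by rewrite big_optionT !big_sumType. Qed.

Lemma card_mycKab : #|{: V}| = (2 * (a + b) + 1)%N.
Proof. by rewrite card_option !card_sum !card_ord; lia. Qed.

Lemma mycKab_colour_ge2 k (c : V -> 'I_k) :
  (0 < a)%N -> (0 < b)%N -> proper_colouring G c -> exists x, (2 <= c x)%N.
Proof.
move=> a0 b0 hc.
exact: (@proper_colouring_cycle5 _ _ _ c (vA (Ordinal a0)) (vB (Ordinal b0))
  (uA (Ordinal a0)) apex (uB (Ordinal b0)) hc).
Qed.

Definition mycKab_colouring (x : V) : 'I_3 :=
  match x with
  | Some (inl (inl _)) | Some (inr (inl _)) => @Ordinal 3 0 isT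
  | Some (inl (inr _)) | Some (inr (inr _)) => @Ordinal 3 1 isT
  | None => @Ordinal 3 2 isT
  end.

Lemma mycKab_colouring_proper : proper_colouring G mycKab_colouring.
Proof. by move=> [[[i|j]|[i|j]]|] [[[i'|j']|[i'|j']]|]. Qed.

Lemma colouring_sum_mycKab_colouring :
  colouring_sum mycKab_colouring = (2 * a + 4 * b + 3)%N.
Proof.
rewrite /colouring_sum !big_ord_recr big_ord0 /= !theta_sumE !sum_mycKab /=.
by rewrite !big_const_ord !iter_addn_0; lia.
Qed.

Lemma chromatic_number_mycKab :
  (0 < a)%N -> (0 < b)%N -> is_chromatic_number G 3.
Proof.
move=> a0 b0; split; first by exists mycKab_colouring; apply: mycKab_colouring_proper.
move=> k k_lt3 [c hc]; have [x cx] := mycKab_colour_ge2 a0 b0 hc.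
by move: (ltn_ord (c x)); lia.
Qed.

(* A colour class is independent: containing the apex it misses all copies,
   else containing an a-side original it misses the b-side, else containing a
   b-side original it misses the a-side, else it lies among the copies. *)
Lemma theta_mycKab_le k (c : V -> 'I_k) i :
  (b < a)%N -> proper_colouring G c -> (theta c i <= 2 * a)%N.
Proof.
move=> hba hc; rewrite theta_sumE sum_mycKab.
have off_nbrs n (f : 'I_n -> V) x :
    (forall j, G x (f j)) -> c x = i -> \sum_j (c (f j) == i : nat) = 0%N.
  move=> hx cx; apply: big1 => j _.
  by move: (hc _ _ (hx j)); rewrite cx eq_sym => /negbTE ->.
have sum_le_card n (f : 'I_n -> V) : (\sum_j (c (f j) == i : nat) <= n)%N.
  by rewrite -[X in (_ <= X)%N]card_ord sum_nat_bool_le.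
move: (sum_le_card _ (fun i0 => vA i0)) (sum_le_card _ (fun j => vB j)).
move: (sum_le_card _ (fun i0 => uA i0)) (sum_le_card _ (fun j => uB j)) => /=.
have [capex | _] := eqVneq (c apex) i.
  by rewrite (off_nbrs _ (fun i0 => uA i0) apex) ?(off_nbrs _ (fun j => uB j) apex) //; lia.
have [i0 /eqP ci0 | noA] := pickP (fun i0 => c (vA i0) == i).
  rewrite (off_nbrs _ (fun j => vB j) (vA i0)) ?(off_nbrs _ (fun j => uB j) (vA i0)) //; lia.
have [j0 /eqP cj0 | noB] := pickP (fun j => c (vB j) == i).
  rewrite (off_nbrs _ (fun i0 => vA i0) (vB j0)) ?(off_nbrs _ (fun i0 => uA i0) (vB j0)) //; lia.
have zA : \sum_i0 (c (vA i0) == i : nat) = 0%N by apply: big1 => i0 _; rewrite noA.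
have zB : \sum_j (c (vB j) == i : nat) = 0%N by apply: big1 => j _; rewrite noB.
by rewrite zA zB; lia.
Qed.

Lemma theta_min_colouring_mycKab (c : V -> 'I_3) :
  (b < a)%N -> (0 < b)%N -> proper_colouring G c ->
  (forall c' : V -> 'I_3, proper_colouring G c' ->
     (colouring_sum c <= colouring_sum c')%N) ->
  forall i : 'I_3, theta c i = nth 0%N [:: 2 * a; 2 * b; 1]%N i.
Proof.
move=> hba b0 hc hmin.
have a0 : (0 < a)%N by apply: leq_ltn_trans hba.
have total := sum_theta c; rewrite card_mycKab !big_ord_recl big_ord0 in total.
have le2a : (theta c ord0 <= 2 * a)%N by apply: theta_mycKab_le.
have := hmin _ mycKab_colouring_proper.
rewrite colouring_sum_mycKab_colouring /colouring_sum !big_ord_recl big_ord0 !lift0.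
move=> sum_le.
have used2 : (0 < theta c (lift ord0 (lift ord0 ord0)))%N.
  have [x cx] := mycKab_colour_ge2 a0 b0 hc.
  rewrite theta_sumE (bigD1 x) //=.
  suff -> : c x = lift ord0 (lift ord0 ord0) by rewrite eqxx.
  by apply: val_inj; rewrite /= /bump /=; move: (ltn_ord (c x)) cx; lia.
have [t0 t1 t2] : [/\ theta c ord0 = 2 * a, theta c (lift ord0 ord0) = 2 * b
                    & theta c (lift ord0 (lift ord0 ord0)) = 1]%N.
  by split; lia.
case=> [[|[|[|//]]] lt3] /=; [rewrite -[RHS]t0 | rewrite -[RHS]t1 | rewrite -[RHS]t2].
all: by congr (theta c _); apply: val_inj.
Qed.

End MycielskianKab.

Local Open Scope ring_scope.

Theorem theorem2p5 (a b : nat) (hba : (b < a)%N) (hb : (1 <= b)%N) (k : nat)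
  (hk : is_chromatic_number (myc (Kab a b)) k)
  (c : myc_vertex ('I_a + 'I_b)%type -> 'I_k)
  (hc : proper_colouring (myc (Kab a b)) c)
  (hmin : forall c' : myc_vertex ('I_a + 'I_b)%type -> 'I_k,
      proper_colouring (myc (Kab a b)) c' -> (colouring_sum c <= colouring_sum c')%N) :
  let n := (a + b)%N in
  colouring_mean c = 1 + (2 * (b + 1))%:R / (2 * n + 1)%:R :> rat /\
  colouring_variance c =
    (16 * a ^ 2 + 4 * b ^ 2 + 8 * a ^ 2 * b + 8 * b ^ 2 * a + 24 * a * b
     + 8 * a + 2 * b)%:R / ((2 * n + 1) ^ 3)%:R :> rat.
Proof.
have a0 : (0 < a)%N by apply: leq_ltn_trans hba.
have k3 : k = 3%N := chromatic_number_unique hk (chromatic_number_mycKab a0 hb).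
subst k.
have theta_c := theta_min_colouring_mycKab hba hb hc hmin.
have card_neq0 : 2 * (a%:R + b%:R) + 1 != 0 :> rat.
  by apply: lt0r_neq0; have := ler0n rat a; have := ler0n rat b; lra.
have mean : colouring_mean c = 1 + (2 * (b + 1))%:R / (2 * (a + b) + 1)%:R.
  rewrite /colouring_mean /freq !big_ord_recl big_ord0 !theta_c !lift0 card_mycKab /=.
  by field.
split=> //.
rewrite /colouring_variance mean /freq !big_ord_recl big_ord0 !theta_c !lift0 card_mycKab /=.
by field.
Qed.
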